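(* Let $(X,I,T)$ be a relative monad and $(S,S_0)$ a monad compatible with $I$ in a 2-category $\mathcal{K}$, and let $d\colon ST\Rightarrow TS_0$ be a relative distributive law of $T$ over $(S,S_0)$. Then setting, for every $K$-indexed $S_0$-algebra $(M,\mu)$, $\hat T(M,\mu)=(TM,\;T\mu\cdot dM)$ and, for every morphism $f$ of $K$-indexed $S_0$-algebras, $\hat T(f)=Tf$, defines a lifting $\hat T$ of $T$ to the algebras of $(S,S_0)$.
   Context: Conventions: 1-cells compose by juxtaposition; vertical composition of 2-cells is written $\cdot$; whiskering by juxtaposition. Relative monad: a relative monad $(X,I,T)$ in $\mathcal{K}$ consists of objects $X_0,X$, 1-cells $I,T\colon X_0\to X$, an operator $(-)^\dagger\colon[I,T]\to[T,T]$ (extension: for every span $A,B\colon O\to X_0$ a function sending 2-cells $IA\Rightarrow TB$ to 2-cells $TA\Rightarrow TB$, natural in $O$, $A$ and $B$) and a 2-cell $t\colon I\Rightarrow T$ such that $k^\dagger\cdot tA=k$, $(tA)^\dagger=1_{TA}$, $(l^\dagger\cdot k)^\dagger=l^\dagger\cdot k^\dagger$ for all $k\colon IA\Rightarrow TB$, $l\colon IB\Rightarrow TC$. Monad compatible with $I\colon X_0\to X$: a pair $(S,S_0)$ of monads $(X,S,m,s)$ and $(X_0,S_0,m_0,s_0)$ in $\mathcal{K}$ with $SI=IS_0$, $mI=Im_0$, $sI=Is_0$. Relative distributive law: a 2-cell $d\colon ST\Rightarrow TS_0$ such that (D1) $d\cdot mT=Tm_0\cdot dS_0\cdot Sd$;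 (D2) $d\cdot sT=Ts_0$; (D3) for all $A,B\colon O\to X_0$ and $f\colon IA\Rightarrow TB$, $dB\cdot S(f^\dagger)=(dB\cdot Sf)^\dagger\cdot dA$ (here $dB\cdot Sf\colon IS_0A=SIA\Rightarrow TS_0B$); (D4) $d\cdot St=tS_0$ as 2-cells $SI=IS_0\Rightarrow TS_0$. Indexed algebras: for a monad $(X,S,m,s)$ and object $K$, $S\text{-}\mathrm{Alg}(K)$ is the category whose objects are pairs $(M,\mu)$ with $M\colon K\to X$, $\mu\colon SM\Rightarrow M$, $\mu\cdot sM=1_M$, $\mu\cdot S\mu=\mu\cdot mM$, and whose morphisms $(M,\mu)\to(N,\nu)$ are 2-cells $f\colon M\Rightarrow N$ with $f\cdot\mu=\nu\cdot Sf$; this gives a 2-functor $S\text{-}\mathrm{Alg}(-)\colon\mathcal{K}^{op}\to\mathbf{Cat}$ by precomposition. Lifting to algebras: a lifting of $T$ to the algebras of $(S,S_0)$ is a 2-natural transformation $\hat T\colon S_0\text{-}\mathrm{Alg}(-)\to S\text{-}\mathrm{Alg}(-)$ of the form $\hat T(M,\mu)=(TM,\hat T\mu)$ on objects and $\hat T(f)=Tf$ on morphisms, carrying the relative monad structure over $I_*\colon(M,\mu)\mapsto(IM,I\mu)$ whose unit and extension are those of $T$, which means precisely: (a) for all $K$-indexed $S_0$-algebras $(M,\mu),(N,\nu)$ and every 2-cell $f\colon IM\Rightarrow TN$ with $f\cdot I\mu=\hat T\nu\cdot Sf$, one has $f^\dagger\cdot\hat T\mu=\hat T\nu\cdot Sf^\dagger$;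 (b) for every $(M,\mu)$, $tM\cdot I\mu=\hat T\mu\cdot StM$. *)

Set Implicit Arguments.

Definition tr {A : Type} (C : A -> A -> Type) {f f' g g' : A}
  (e1 : f = f') (e2 : g = g') (a : C f g) : C f' g' :=
  match e1 in _ = x return C x g' with
  | eq_refl => match e2 in _ = y return C f y with eq_refl => a end
  end.

(* Equality of 2-cells whose (source/target) 1-cells are only propositionally
   equal (e.g. by associativity or SI = IS0): in a strict 2-category these
   equations are literal equalities of 2-cells. *)
Definition heq {A : Type} (C : A -> A -> Type) {f g f' g' : A}
  (a : C f g) (b : C f' g') : Prop :=
  exists (e1 : f = f') (e2 : g = g'), tr C e1 e2 a = b.

(* Strict 2-category.  comp G F is the composite "GF" (F first). *)
Record TwoCat := {
  Ob : Type;
  Hom : Ob -> Ob -> Type;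
  comp : forall {X Y Z : Ob}, Hom Y Z -> Hom X Y -> Hom X Z;
  idc : forall X : Ob, Hom X X;
  Cell : forall {X Y : Ob}, Hom X Y -> Hom X Y -> Type;
  vcomp : forall {X Y : Ob} {f g h : Hom X Y}, Cell g h -> Cell f g -> Cell f h;
  id2 : forall {X Y : Ob} (f : Hom X Y), Cell f f;
  lwh : forall {X Y Z : Ob} (F : Hom Y Z) {f g : Hom X Y},
      Cell f g -> Cell (comp F f) (comp F g);
  rwh : forall {X Y Z : Ob} {f g : Hom Y Z},
      Cell f g -> forall A : Hom X Y, Cell (comp f A) (comp g A);
  comp_assoc : forall {W X Y Z : Ob} (h : Hom Y Z) (g : Hom X Y) (f : Hom W X),
      comp (comp h g) f = comp h (comp g f);
  comp_idl : forall {X Y : Ob} (f : Hom X Y), comp (idc Y) f = f;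
  comp_idr : forall {X Y : Ob} (f : Hom X Y), comp f (idc X) = f;
  vcomp_assoc : forall {X Y : Ob} {f g h k : Hom X Y}
      (c : Cell h k) (b : Cell g h) (a : Cell f g),
      vcomp c (vcomp b a) = vcomp (vcomp c b) a;
  vcomp_idl : forall {X Y : Ob} {f g : Hom X Y} (a : Cell f g), vcomp (id2 g) a = a;
  vcomp_idr : forall {X Y : Ob} {f g : Hom X Y} (a : Cell f g), vcomp a (id2 f) = a;
  lwh_vcomp : forall {X Y Z : Ob} (F : Hom Y Z) {f g h : Hom X Y}
      (b : Cell g h) (a : Cell f g), lwh F (vcomp b a) = vcomp (lwh F b) (lwh F a);
  lwh_id2 : forall {X Y Z : Ob} (F : Hom Y Z) (f : Hom X Y),
      lwh F (id2 f) = id2 (comp F f);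
  rwh_vcomp : forall {X Y Z : Ob} {f g h : Hom Y Z} (b : Cell g h) (a : Cell f g)
      (A : Hom X Y), rwh (vcomp b a) A = vcomp (rwh b A) (rwh a A);
  rwh_id2 : forall {X Y Z : Ob} (f : Hom Y Z) (A : Hom X Y),
      rwh (id2 f) A = id2 (comp f A);
  lwh_lwh : forall {W X Y Z : Ob} (G : Hom Y Z) (F : Hom X Y) {f g : Hom W X}
      (a : Cell f g), heq (@Cell W Z) (lwh G (lwh F a)) (lwh (comp G F) a);
  rwh_rwh : forall {W X Y Z : Ob} {f g : Hom Y Z} (a : Cell f g) (A : Hom X Y)
      (B : Hom W X), heq (@Cell W Z) (rwh (rwh a A) B) (rwh a (comp A B));
  lwh_rwh : forall {W X Y Z : Ob} (F : Hom Y Z) {f g : Hom X Y} (a : Cell f g)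
      (A : Hom W X), heq (@Cell W Z) (rwh (lwh F a) A) (lwh F (rwh a A));
  lwh_idc : forall {X Y : Ob} {f g : Hom X Y} (a : Cell f g),
      heq (@Cell X Y) (lwh (idc Y) a) a;
  rwh_idc : forall {X Y : Ob} {f g : Hom X Y} (a : Cell f g),
      heq (@Cell X Y) (rwh a (idc X)) a;
  interchange : forall {X Y Z : Ob} {f g : Hom X Y} {h k : Hom Y Z}
      (a : Cell f g) (b : Cell h k),
      vcomp (lwh k a) (rwh b f) = vcomp (rwh b g) (lwh h a)
}.

Arguments comp {_ _ _ _}.
Arguments idc {_}.
Arguments Cell {_ _ _}.
Arguments vcomp {_ _ _ _ _ _}.
Arguments id2 {_ _ _}.
Arguments lwh {_ _ _ _} F {_ _}.
Arguments rwh {_ _ _ _ _ _} a A.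
Arguments comp_assoc {_ _ _ _ _}.
Arguments comp_idl {_ _ _}.
Arguments comp_idr {_ _ _}.

Definition heqK {K : TwoCat} {X Y : Ob K} {f g f' g' : Hom K X Y}
  (a : Cell f g) (b : Cell f' g') : Prop := heq (@Cell K X Y) a b.

Section Structures.
Variable K : TwoCat.

Record RelMonad (X0 X : Ob K) := {
  rI : Hom K X0 X;
  rT : Hom K X0 X;
  ext : forall {O : Ob K} {A B : Hom K O X0},
      Cell (comp rI A) (comp rT B) -> Cell (comp rT A) (comp rT B);
  runit : Cell rI rT;
  ext_natO : forall (O O' : Ob K) (H : Hom K O' O) (A B : Hom K O X0)
      (k : Cell (comp rI A) (comp rT B)),
      ext (tr (@Cell K O' X) (comp_assoc rI A H) (comp_assoc rT B H) (rwh k H))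
      = tr (@Cell K O' X) (comp_assoc rT A H) (comp_assoc rT B H) (rwh (ext k) H);
  ext_natA : forall (O : Ob K) (A A' B : Hom K O X0) (al : Cell A' A)
      (k : Cell (comp rI A) (comp rT B)),
      ext (vcomp k (lwh rI al)) = vcomp (ext k) (lwh rT al);
  ext_natB : forall (O : Ob K) (A B B' : Hom K O X0) (be : Cell B B')
      (k : Cell (comp rI A) (comp rT B)),
      ext (vcomp (lwh rT be) k) = vcomp (lwh rT be) (ext k);
  ext_unit_l : forall (O : Ob K) (A B : Hom K O X0) (k : Cell (comp rI A) (comp rT B)),
      vcomp (ext k) (rwh runit A) = k;
  ext_unit_r : forall (O : Ob K) (A : Hom K O X0), ext (rwh runit A) = id2 (comp rT A);
  ext_assoc : forall (O : Ob K) (A B C : Hom K O X0)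
      (k : Cell (comp rI A) (comp rT B)) (l : Cell (comp rI B) (comp rT C)),
      ext (vcomp (ext l) k) = vcomp (ext l) (ext k)
}.

Record Monad (X : Ob K) := {
  mS : Hom K X X;
  mm : Cell (comp mS mS) mS;
  ms : Cell (idc X) mS;
  m_assoc : heqK (vcomp mm (rwh mm mS)) (vcomp mm (lwh mS mm));
  m_unitl : heqK (vcomp mm (rwh ms mS)) (id2 mS);
  m_unitr : heqK (vcomp mm (lwh mS ms)) (id2 mS)
}.

(* (S, S0) compatible with I : X0 -> X: the equation SI = IS0 is the separate
   hypothesis eSI; the remaining two conditions are below. *)
Definition compatible {X0 X : Ob K} (I : Hom K X0 X) (S : Monad X) (S0 : Monad X0)
  (eSI : comp (mS S) I = comp I (mS S0)) : Prop :=
  heqK (rwh (mm S) I) (lwh I (mm S0)) /\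
  heqK (rwh (ms S) I) (lwh I (ms S0)).

Definition eSIA {X0 X O : Ob K} {I : Hom K X0 X} {Sm : Hom K X X} {S0m : Hom K X0 X0}
  (eSI : comp Sm I = comp I S0m) (A : Hom K O X0) :
  comp Sm (comp I A) = comp I (comp S0m A) :=
  eq_trans (eq_sym (comp_assoc Sm I A))
    (eq_trans (f_equal (fun x => comp x A) eSI) (comp_assoc I S0m A)).

Definition rel_distr_law {X0 X : Ob K} (R : RelMonad X0 X) (S : Monad X)
  (S0 : Monad X0) (eSI : comp (mS S) (rI R) = comp (rI R) (mS S0)) (d : Cell (comp (mS S) (rT R)) (comp (rT R) (mS S0))) : Prop :=
  let T := rT R in let I := rI R in let Sm := mS S in let S0m := mS S0 in
  heqK (vcomp d (rwh (mm S) T))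
       (vcomp (lwh T (mm S0))
          (vcomp (tr (@Cell K X0 X) eq_refl (comp_assoc T S0m S0m) (rwh d S0m))
                 (tr (@Cell K X0 X) eq_refl (eq_sym (comp_assoc Sm T S0m)) (lwh Sm d))))
  /\ heqK (vcomp d (rwh (ms S) T)) (lwh T (ms S0))
  /\ (forall (O : Ob K) (A B : Hom K O X0) (f : Cell (comp I A) (comp T B)),
        heqK (vcomp (rwh d B)
                 (tr (@Cell K O X) eq_refl (eq_sym (comp_assoc Sm T B)) (lwh Sm (ext R f))))
             (vcomp (ext R (B := comp S0m B)
                       (tr (@Cell K O X) (eSIA eSI A) (comp_assoc T S0m B)
                          (vcomp (rwh d B)
                             (tr (@Cell K O X) eq_refl (eq_sym (comp_assoc Sm T B))
                                (lwh Sm f)))))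
                    (tr (@Cell K O X) eq_refl (comp_assoc T S0m A) (rwh d A))))
  /\ heqK (vcomp d (lwh Sm (runit R))) (rwh (runit R) S0m).

Definition is_alg {X : Ob K} (S : Monad X) {K' : Ob K} (M : Hom K K' X)
  (mu : Cell (comp (mS S) M) M) : Prop :=
  heqK (vcomp mu (rwh (ms S) M)) (id2 M) /\
  heqK (vcomp mu (lwh (mS S) mu)) (vcomp mu (rwh (mm S) M)).

Definition is_alg_mor {X : Ob K} (S : Monad X) {K' : Ob K} {M N : Hom K K' X}
  (mu : Cell (comp (mS S) M) M) (nu : Cell (comp (mS S) N) N) (f : Cell M N) : Prop :=
  vcomp f mu = vcomp nu (lwh (mS S) f).

(* Restriction of an algebra structure along H : K'' -> K' (the 2-functor
   S-Alg(-) on 1-cells). *)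
Definition alg_restr {X : Ob K} (S : Monad X) {K' K'' : Ob K} (M : Hom K K' X)
  (mu : Cell (comp (mS S) M) M) (H : Hom K K'' K') :
  Cell (comp (mS S) (comp M H)) (comp M H) :=
  tr (@Cell K K'' X) (comp_assoc (mS S) M H) eq_refl (rwh mu H).

(* A lifting of T to the algebras of (S, S0): a family
   Th M mu : S(TM) => TM  (so that That(M,mu) = (TM, Th M mu), That(f) = Tf)
   forming a 2-natural transformation S0-Alg(-) -> S-Alg(-), and carrying
   the relative monad structure over I_* (conditions (a), (b)). *)
Definition is_lifting {X0 X : Ob K} (R : RelMonad X0 X) (S : Monad X) (S0 : Monad X0)
  (Th : forall (K' : Ob K) (M : Hom K K' X0),
          Cell (comp (mS S0) M) M -> Cell (comp (mS S) (comp (rT R) M)) (comp (rT R) M))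
  : Prop :=
  let T := rT R in let I := rI R in
  (forall (K' : Ob K) (M : Hom K K' X0) (mu : Cell (comp (mS S0) M) M),
      is_alg S0 M mu -> is_alg S (comp T M) (Th K' M mu))
  /\ (forall (K' : Ob K) (M N : Hom K K' X0) (mu : Cell (comp (mS S0) M) M)
        (nu : Cell (comp (mS S0) N) N) (f : Cell M N),
        is_alg S0 M mu -> is_alg S0 N nu -> is_alg_mor S0 mu nu f ->
        is_alg_mor S (Th K' M mu) (Th K' N nu) (lwh T f))
  /\ (forall (K' : Ob K) (M : Hom K K' X0), lwh T (id2 M) = id2 (comp T M))
  /\ (forall (K' : Ob K) (M N P : Hom K K' X0) (f : Cell M N) (g : Cell N P),
        lwh T (vcomp g f) = vcomp (lwh T g) (lwh T f))
  /\ (forall (K' K'' : Ob K) (H : Hom K K'' K') (M : Hom K K' X0)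
        (mu : Cell (comp (mS S0) M) M),
        is_alg S0 M mu ->
        heqK (Th K'' (comp M H) (alg_restr S0 M mu H)) (rwh (Th K' M mu) H))
  /\ (forall (K' K'' : Ob K) (H : Hom K K'' K') (M N : Hom K K' X0) (f : Cell M N),
        heqK (lwh T (rwh f H)) (rwh (lwh T f) H))
  /\ (forall (K' K'' : Ob K) (H H' : Hom K K'' K') (sg : Cell H H') (M : Hom K K' X0),
        heqK (lwh T (lwh M sg)) (lwh (comp T M) sg))
  /\ (forall (K' : Ob K) (M N : Hom K K' X0) (mu : Cell (comp (mS S0) M) M)
        (nu : Cell (comp (mS S0) N) N) (f : Cell (comp I M) (comp T N)),
        is_alg S0 M mu -> is_alg S0 N nu ->
        heqK (vcomp f (lwh I mu)) (vcomp (Th K' N nu) (lwh (mS S) f)) ->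
        vcomp (ext R f) (Th K' M mu) = vcomp (Th K' N nu) (lwh (mS S) (ext R f)))
  /\ (forall (K' : Ob K) (M : Hom K K' X0) (mu : Cell (comp (mS S0) M) M),
        is_alg S0 M mu ->
        heqK (vcomp (rwh (runit R) M) (lwh I mu))
             (vcomp (Th K' M mu) (lwh (mS S) (rwh (runit R) M)))).

Definition lift_of_distr {X0 X : Ob K} (R : RelMonad X0 X) (S : Monad X)
  (S0 : Monad X0) (d : Cell (comp (mS S) (rT R)) (comp (rT R) (mS S0)))
  (K' : Ob K) (M : Hom K K' X0) (mu : Cell (comp (mS S0) M) M)
  : Cell (comp (mS S) (comp (rT R) M)) (comp (rT R) M) :=
  vcomp (lwh (rT R) mu)
        (tr (@Cell K K' X) (comp_assoc (mS S) (rT R) M) (comp_assoc (rT R) (mS S0) M)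
            (rwh d M)).

End Structures.

From Stdlib Require Import ProofIrrelevance.

Section HeqCalculus.
Context {K : TwoCat}.

Lemma heq_refl {X Y : Ob K} {f g : Hom K X Y} (a : Cell f g) : heqK a a.
Proof. exists eq_refl, eq_refl. reflexivity. Qed.

Lemma heq_sym {X Y : Ob K} {f g f' g' : Hom K X Y} (a : Cell f g) (b : Cell f' g') :
  heqK a b -> heqK b a.
Proof. intros [e1 [e2 H]]. destruct e1, e2. simpl in H. subst. apply heq_refl. Qed.

Lemma heq_trans {X Y : Ob K} {f g f' g' f'' g'' : Hom K X Y} (a : Cell f g) (b : Cell f' g')
  (c : Cell f'' g'') : heqK a b -> heqK b c -> heqK a c.
Proof.
  intros [e1 [e2 H]] [e3 [e4 H']]. destruct e1, e2, e3, e4. simpl in *. subst.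
  apply heq_refl.
Qed.

Lemma heq_tr {X Y : Ob K} {f g f' g' : Hom K X Y} (e1 : f = f') (e2 : g = g') (a : Cell f g) :
  heqK (tr (@Cell K X Y) e1 e2 a) a.
Proof. destruct e1, e2. apply heq_refl. Qed.

Lemma heq_eq {X Y : Ob K} {f g : Hom K X Y} (a b : Cell f g) : heqK a b -> a = b.
Proof.
  intros [e1 [e2 H]].
  rewrite (proof_irrelevance _ e1 eq_refl), (proof_irrelevance _ e2 eq_refl) in H.
  exact H.
Qed.

Lemma eq_heq {X Y : Ob K} {f g : Hom K X Y} (a b : Cell f g) : a = b -> heqK a b.
Proof. intros ->. apply heq_refl. Qed.

Lemma heq_vcomp {X Y : Ob K} {f g h f' g' h' : Hom K X Y} (a : Cell f g) (b : Cell g h)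
  (a' : Cell f' g') (b' : Cell g' h') :
  heqK a a' -> heqK b b' -> heqK (vcomp b a) (vcomp b' a').
Proof.
  intros [e1 [e2 H]] [e3 [e4 H']]. subst a' b'. destruct e1, e2, e4.
  rewrite (proof_irrelevance _ e3 eq_refl). apply heq_refl.
Qed.

Lemma heq_lwh {X Y : Ob K} {Z : Ob K} (F : Hom K Y Z) {f g f' g' : Hom K X Y}
  (a : Cell f g) (a' : Cell f' g') : heqK a a' -> heqK (lwh F a) (lwh F a').
Proof. intros [e1 [e2 H]]. destruct e1, e2. simpl in H. subst. apply heq_refl. Qed.

Lemma heq_rwh {X Y : Ob K} {W : Ob K} {f g f' g' : Hom K X Y} (a : Cell f g) (a' : Cell f' g')
  (A : Hom K W X) : heqK a a' -> heqK (rwh a A) (rwh a' A).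
Proof. intros [e1 [e2 H]]. destruct e1, e2. simpl in H. subst. apply heq_refl. Qed.

End HeqCalculus.

Section MonadAlgebras.
Context {K : TwoCat} {Y : Ob K} (S : Monad K Y) {K' : Ob K}.

Definition unit_at (M : Hom K K' Y) : Cell M (comp (mS S) M) :=
  tr (@Cell K K' Y) (comp_idl M) eq_refl (rwh (ms S) M).

Definition mult_at (M : Hom K K' Y) :
  Cell (comp (mS S) (comp (mS S) M)) (comp (mS S) M) :=
  tr (@Cell K K' Y) (comp_assoc (mS S) (mS S) M) eq_refl (rwh (mm S) M).

Lemma is_alg_eqs (M : Hom K K' Y) (mu : Cell (comp (mS S) M) M) :
  is_alg S M mu <->
  vcomp mu (unit_at M) = id2 M /\ vcomp mu (lwh (mS S) mu) = vcomp mu (mult_at M).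
Proof.
  unfold unit_at, mult_at. split; intros [Hunit Hassoc]; split.
  - apply heq_eq. eapply heq_trans; [|exact Hunit].
    eapply heq_vcomp; [apply heq_tr | apply heq_refl].
  - apply heq_eq. eapply heq_trans; [exact Hassoc|].
    eapply heq_vcomp; [apply heq_sym, heq_tr | apply heq_refl].
  - eapply heq_trans; [|apply eq_heq, Hunit].
    eapply heq_vcomp; [apply heq_sym, heq_tr | apply heq_refl].
  - eapply heq_trans; [apply eq_heq, Hassoc|].
    eapply heq_vcomp; [apply heq_tr | apply heq_refl].
Qed.

End MonadAlgebras.

Section DistributiveLaw.
Context {K : TwoCat} {X0 X : Ob K} (R : RelMonad K X0 X) (S : Monad K X)
  (S0 : Monad K X0) (d : Cell (comp (mS S) (rT R)) (comp (rT R) (mS S0))).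

Local Notation T := (rT R).
Local Notation I := (rI R).
Local Notation Sm := (mS S).
Local Notation S0m := (mS S0).

Definition d_at {K' : Ob K} (M : Hom K K' X0) :
  Cell (comp Sm (comp T M)) (comp T (comp S0m M)) :=
  tr (@Cell K K' X) (comp_assoc Sm T M) (comp_assoc T S0m M) (rwh d M).

Lemma lift_of_distr_d_at {K' : Ob K} (M : Hom K K' X0) (mu : Cell (comp S0m M) M) :
  lift_of_distr R S S0 d K' M mu = vcomp (lwh T mu) (d_at M).
Proof. reflexivity. Qed.

Lemma d_at_natural {K' : Ob K} (M N : Hom K K' X0) (f : Cell M N) :
  vcomp (d_at N) (lwh Sm (lwh T f)) = vcomp (lwh T (lwh S0m f)) (d_at M).
Proof.
  apply heq_eq. unfold d_at.
  eapply heq_trans; [eapply heq_vcomp; [apply lwh_lwh | apply heq_tr]|].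
  rewrite <- interchange.
  eapply heq_vcomp; [apply heq_sym, heq_tr | apply heq_sym, lwh_lwh].
Qed.

Lemma d_at_unit
  (D2 : heqK (vcomp d (rwh (ms S) T)) (lwh T (ms S0)))
  {K' : Ob K} (M : Hom K K' X0) :
  vcomp (d_at M) (unit_at S (comp T M)) = lwh T (unit_at S0 M).
Proof.
  apply heq_eq. unfold d_at, unit_at.
  eapply heq_trans.
  { eapply heq_vcomp; [eapply heq_trans; [apply heq_tr | apply heq_sym, rwh_rwh]
                     | apply heq_tr]. }
  rewrite <- rwh_vcomp.
  eapply heq_trans; [eapply heq_rwh, D2|].
  eapply heq_trans; [apply lwh_rwh | eapply heq_lwh, heq_sym, heq_tr].
Qed.

Lemma d_at_mult
  (D1 : heqK (vcomp d (rwh (mm S) T))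
       (vcomp (lwh T (mm S0))
          (vcomp (tr (@Cell K X0 X) eq_refl (comp_assoc T S0m S0m) (rwh d S0m))
                 (tr (@Cell K X0 X) eq_refl (eq_sym (comp_assoc Sm T S0m)) (lwh Sm d)))))
  {K' : Ob K} (M : Hom K K' X0) :
  vcomp (d_at M) (mult_at S (comp T M))
  = vcomp (lwh T (mult_at S0 M)) (vcomp (d_at (comp S0m M)) (lwh Sm (d_at M))).
Proof.
  apply heq_eq. unfold d_at, mult_at.
  eapply heq_trans.
  { eapply heq_vcomp; [eapply heq_trans; [apply heq_tr | apply heq_sym, rwh_rwh]
                     | apply heq_tr]. }
  rewrite <- rwh_vcomp.
  eapply heq_trans; [eapply heq_rwh, D1|]. rewrite !rwh_vcomp.
  eapply heq_vcomp; [eapply heq_vcomp|].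
  - eapply heq_trans; [eapply heq_rwh, heq_tr|].
    eapply heq_trans; [apply lwh_rwh | eapply heq_lwh, heq_sym, heq_tr].
  - eapply heq_trans; [eapply heq_rwh, heq_tr|].
    eapply heq_trans; [apply rwh_rwh | apply heq_sym, heq_tr].
  - eapply heq_trans; [apply lwh_rwh | eapply heq_lwh, heq_sym, heq_tr].
Qed.

(* (D4) at M: dM carries the unit of T at M to its unit at S0 M
   (the sources S(IM) and I(S0 M) agree by SI = IS0). *)
Lemma d_at_runit
  (D4 : heqK (vcomp d (lwh Sm (runit R))) (rwh (runit R) S0m))
  {K' : Ob K} (M : Hom K K' X0) :
  heqK (vcomp (d_at M) (lwh Sm (rwh (runit R) M))) (rwh (runit R) (comp S0m M)).
Proof.
  unfold d_at.
  eapply heq_trans; [eapply heq_vcomp; [eapply heq_sym, lwh_rwh | apply heq_tr]|].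
  rewrite <- rwh_vcomp.
  eapply heq_trans; [eapply heq_rwh, D4 | apply rwh_rwh].
Qed.

(* (D3) compares cells out of S(IA) and out of I(S0 A), identified by SI = IS0. *)
Context (eSI : comp Sm I = comp I S0m).

Lemma d_at_ext
  (D3 : forall (O : Ob K) (A B : Hom K O X0) (f : Cell (comp I A) (comp T B)),
        heqK (vcomp (rwh d B)
                 (tr (@Cell K O X) eq_refl (eq_sym (comp_assoc Sm T B)) (lwh Sm (ext R f))))
             (vcomp (ext R (B := comp S0m B)
                       (tr (@Cell K O X) (eSIA K eSI A) (comp_assoc T S0m B)
                          (vcomp (rwh d B)
                             (tr (@Cell K O X) eq_refl (eq_sym (comp_assoc Sm T B))
                                (lwh Sm f)))))
                    (tr (@Cell K O X) eq_refl (comp_assoc T S0m A) (rwh d A))))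
  {O : Ob K} (A B : Hom K O X0) (f : Cell (comp I A) (comp T B)) :
  vcomp (d_at B) (lwh Sm (ext R f))
  = vcomp (ext R (tr (@Cell K O X) (eSIA K eSI A) eq_refl (vcomp (d_at B) (lwh Sm f))))
          (d_at A).
Proof.
  assert (Hd_at : forall (C : Hom K O X) (g : Cell C (comp T B)),
    heqK (vcomp (d_at B) (lwh Sm g))
         (vcomp (rwh d B) (tr (@Cell K O X) eq_refl (eq_sym (comp_assoc Sm T B)) (lwh Sm g)))).
  { intros C g. unfold d_at.
    eapply heq_vcomp; [apply heq_sym, heq_tr | apply heq_tr]. }
  apply heq_eq. eapply heq_trans; [apply Hd_at|].
  eapply heq_trans; [apply D3|].
  eapply heq_vcomp; [unfold d_at; eapply heq_trans; [apply heq_tr | apply heq_sym, heq_tr]|].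
  apply eq_heq, f_equal, heq_eq.
  eapply heq_trans; [apply heq_tr|].
  eapply heq_trans; [apply heq_sym, Hd_at | apply heq_sym, heq_tr].
Qed.

Local Notation That := (lift_of_distr R S S0 d).

Lemma lift_is_alg
  (D2 : forall {K' : Ob K} (M : Hom K K' X0),
        vcomp (d_at M) (unit_at S (comp T M)) = lwh T (unit_at S0 M))
  (D1 : forall {K' : Ob K} (M : Hom K K' X0),
        vcomp (d_at M) (mult_at S (comp T M))
        = vcomp (lwh T (mult_at S0 M)) (vcomp (d_at (comp S0m M)) (lwh Sm (d_at M))))
  {K' : Ob K} (M : Hom K K' X0) (mu : Cell (comp S0m M) M) :
  is_alg S0 M mu -> is_alg S (comp T M) (That K' M mu).
Proof.
  intros [Hunit Hassoc]%is_alg_eqs. apply is_alg_eqs.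
  rewrite lift_of_distr_d_at. split.
  - rewrite <- vcomp_assoc, D2, <- lwh_vcomp, Hunit. apply lwh_id2.
  - rewrite lwh_vcomp, <- !vcomp_assoc, (vcomp_assoc K (d_at M)), d_at_natural.
    rewrite <- vcomp_assoc, vcomp_assoc, <- lwh_vcomp, Hassoc, lwh_vcomp.
    rewrite <- !vcomp_assoc, <- D1. reflexivity.
Qed.

(* Naturality of dM: That sends algebra morphisms f to algebra morphisms Tf. *)
Lemma lift_is_alg_mor {K' : Ob K} (M N : Hom K K' X0) (mu : Cell (comp S0m M) M)
  (nu : Cell (comp S0m N) N) (f : Cell M N) :
  is_alg_mor S0 mu nu f -> is_alg_mor S (That K' M mu) (That K' N nu) (lwh T f).
Proof.
  unfold is_alg_mor. intros Hf. rewrite !lift_of_distr_d_at.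
  rewrite vcomp_assoc, <- lwh_vcomp, Hf, lwh_vcomp, <- !vcomp_assoc, d_at_natural.
  reflexivity.
Qed.

(* That commutes with restriction along H : K'' -> K' (both are whiskerings). *)
Lemma lift_restr {K' K'' : Ob K} (H : Hom K K'' K') (M : Hom K K' X0)
  (mu : Cell (comp S0m M) M) :
  heqK (That K'' (comp M H) (alg_restr S0 M mu H)) (rwh (That K' M mu) H).
Proof.
  rewrite !lift_of_distr_d_at. unfold d_at, alg_restr. rewrite rwh_vcomp.
  eapply heq_vcomp.
  - eapply heq_trans; [apply heq_tr|].
    eapply heq_trans; [apply heq_sym, rwh_rwh | eapply heq_sym, heq_rwh, heq_tr].
  - eapply heq_trans; [eapply heq_lwh, heq_tr | apply heq_sym, lwh_rwh].
Qed.

Lemma lift_ext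
  (ext_law : forall {O : Ob K} (A B : Hom K O X0) (f : Cell (comp I A) (comp T B)),
    vcomp (d_at B) (lwh Sm (ext R f))
    = vcomp (ext R (tr (@Cell K O X) (eSIA K eSI A) eq_refl (vcomp (d_at B) (lwh Sm f))))
            (d_at A))
  {K' : Ob K} (M N : Hom K K' X0) (mu : Cell (comp S0m M) M)
  (nu : Cell (comp S0m N) N) (f : Cell (comp I M) (comp T N)) :
  heqK (vcomp f (lwh I mu)) (vcomp (That K' N nu) (lwh Sm f)) ->
  vcomp (ext R f) (That K' M mu) = vcomp (That K' N nu) (lwh Sm (ext R f)).
Proof.
  intros Hf. rewrite !lift_of_distr_d_at. symmetry.
  rewrite <- vcomp_assoc, ext_law, vcomp_assoc, <- ext_natB.
  rewrite vcomp_assoc, <- ext_natA.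
  apply (f_equal (fun g => vcomp g (d_at M))), f_equal, heq_eq.
  apply heq_sym. eapply heq_trans; [exact Hf|].
  rewrite lift_of_distr_d_at, <- vcomp_assoc.
  eapply heq_vcomp; [apply heq_sym, heq_tr | apply heq_refl].
Qed.

(* (D4) gives condition (b): the unit of T is a morphism of algebras. *)
Lemma lift_runit
  (runit_law : forall {K' : Ob K} (M : Hom K K' X0),
    heqK (vcomp (d_at M) (lwh Sm (rwh (runit R) M))) (rwh (runit R) (comp S0m M)))
  {K' : Ob K} (M : Hom K K' X0) (mu : Cell (comp S0m M) M) :
  heqK (vcomp (rwh (runit R) M) (lwh I mu))
       (vcomp (That K' M mu) (lwh Sm (rwh (runit R) M))).
Proof.
  rewrite lift_of_distr_d_at, <- vcomp_assoc, <- (interchange K mu (runit R)).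
  eapply heq_vcomp; [apply heq_sym, runit_law | apply heq_refl].
Qed.
End DistributiveLaw.

Theorem mainTheorem10 (K : TwoCat) (X0 X : Ob K) (R : RelMonad K X0 X)
  (S : Monad K X) (S0 : Monad K X0)
  (eSI : comp (mS S) (rI R) = comp (rI R) (mS S0))
  (HSS0 : compatible (rI R) S S0 eSI)
  (d : Cell (comp (mS S) (rT R)) (comp (rT R) (mS S0)))
  (Hd : rel_distr_law R S S0 eSI d) :
  is_lifting R S S0 (lift_of_distr R S S0 d).
Proof.
  destruct Hd as (D1 & D2 & D3 & D4).
  unfold is_lifting; cbv zeta.
  repeat match goal with |- _ /\ _ => split end.
  - intros K' M mu. apply lift_is_alg.
    + intros; apply d_at_unit, D2.
    + intros; apply d_at_mult, D1.
  - intros K' M N mu nu f _ _. apply lift_is_alg_mor.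
  - intros K' M. apply lwh_id2.
  - intros K' M N P f g. apply lwh_vcomp.
  - intros K' K'' H M mu _. apply lift_restr.
  - intros K' K'' H M N f. apply heq_sym, lwh_rwh.
  - intros K' K'' H H' sg M. apply lwh_lwh.
  - intros K' M N mu nu f _ _. apply lift_ext with eSI; intros; apply d_at_ext, D3.
  - intros K' M mu _. apply lift_runit; intros; apply d_at_runit, D4.
Qed.
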